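(* Let $n\ge1$, $k\ge2$, $\mathcal{K}=\{\kappa_0,\dots,\kappa_{k-1}\}$ a set of size $k$, $\epsilon\ge0$ and $p=e^\epsilon/(k-1+e^\epsilon)$. For the uniform prior $\pi$ on $\mathcal{K}^n$ and the single-target gain function $g_{\rm T}$, $$V_{\rm T}[\pi\triangleright\mathbf{N}\mathbf{S}]=\frac{1}{k^n}\sum_{\substack{n_0,\dots,n_{k-1}\ge0\\ n_0+\dots+n_{k-1}=n}}\binom{n}{n_0,\dots,n_{k-1}}\frac{p\,n^*+\frac{1-p}{k-1}(n-n^* )}{n},$$ where $n^*=\max(n_0,\dots,n_{k-1})$.
   Context: A dataset is $x=(x_0,\dots,x_{n-1})\in\mathcal{K}^n$; its histogram $h(x)$ is the map $\kappa\mapsto|\{i:x_i=\kappa\}|$; $\#z$ is the number of datasets with histogram $z$. Full $k$-RR channel $\mathbf{N}:\mathcal{K}^n\to\mathcal{K}^n$: $\mathbf{N}_{x,y}=\prod_{i=0}^{n-1}q(y_i\mid x_i)$, $q(b\mid a)=p$ if $b=a$, $(1-p)/(k-1)$ otherwise. Shuffle channel $\mathbf{S}:\mathcal{K}^n\to\mathcal{K}^n$: $\mathbf{S}_{x,y}=1/\#h(x)$ if $h(y)=h(x)$, else $0$; $\mathbf{N}\mathbf{S}$ is the matrix product. Uniform prior $\pi_x=1/k^n$. Single-target gain function: $\mathcal{W}=\mathcal{K}$, $g_{\rm T}(w,x)=1$ if $x_0=w$, else $0$. Posterior vulnerability: $V_{\rm T}[\pi\triangleright\mathbf{C}]=\sum_{y}\max_{w}\sum_{x}\pi_x\mathbf{C}_{x,y}g_{\rm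 T}(w,x)$. The multinomial coefficient is $\binom{n}{n_0,\dots,n_{k-1}}=n!/(n_0!\cdots n_{k-1}!)$. *)

From HB Require Import structures.
From mathcomp Require Import all_boot all_order all_algebra.
From mathcomp Require Import reals sequences exp.
Set Implicit Arguments. Unset Strict Implicit. Unset Printing Implicit Defensive.
Import Order.TTheory GRing.Theory Num.Theory.
Local Open Scope ring_scope.

Section Defs.
Variables (R : realType) (n k : nat).

(* K = 'I_k (kappa_j = j), datasets are x : 'I_n -> 'I_k *)
Definition dataset := {ffun 'I_n -> 'I_k}.

Definition hist (x : dataset) : {ffun 'I_k -> nat} :=
  [ffun a => #|[set i | x i == a]|].

Definition numhist (z : {ffun 'I_k -> nat}) : nat :=
  #|[set y : dataset | hist y == z]|.

Definition krr (p : R) (a b : 'I_k) : R :=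
  if b == a then p else (1 - p) / (k%:R - 1).

Definition Nch (p : R) (x y : dataset) : R := \prod_(i < n) krr p (x i) (y i).

Definition Sch (x y : dataset) : R :=
  if hist y == hist x then 1 / (numhist (hist x))%:R else 0.

Definition NSch (p : R) (x y : dataset) : R := \sum_(z : dataset) Nch p x z * Sch z y.

Definition unif_prior (x : dataset) : R := 1 / (k%:R ^+ n).

(* single-target gain: g_T(w, x) = 1 iff x_0 = w (index 0 of 'I_n, n >= 1) *)
Definition gT (w : 'I_k) (x : dataset) : R :=
  if [exists i : 'I_n, (val i == 0%N) && (x i == w)] then 1 else 0.

(* The max is a fold of Num.max starting at 0; all summands considered are
   nonnegative, so this is the maximum over the (nonempty) set W = 'I_k. *)
Definition VT (pi : dataset -> R) (C : dataset -> dataset -> R) : R :=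
  \sum_(y : dataset) \big[Num.max/0]_(w : 'I_k)
      \sum_(x : dataset) pi x * C x y * gT w x.

End Defs.

(* Summing over the secret x first, every coordinate but the first
   contributes a column sum of k-RR, which is 1; what remains is the average
   of q(z_0 | w) over the #z datasets with histogram z = h(y).  A fraction
   z_w / n of them have first entry w, so the mass of the guess w at the
   output y is k^-n (r + (p - r) z_w / n) with r = (1 - p)/(k - 1).  As
   p >= r, the best guess is a most frequent symbol, and grouping the
   outputs by histogram (#z is the multinomial coefficient) gives the
   formula. *)

From HB Require Import structures.
From mathcomp Require Import all_boot all_order all_algebra.
From mathcomp Require Import reals sequences exp.
From mathcomp Require Import zify ring.
Import Order.TTheory GRing.Theory Num.Theory.
Set Implicit Arguments. Unset Strict Implicit. Unset Printing Implicit Defensive.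

Section ConsFfun.
Variables (n : nat) (T : finType).

Definition fcons (x : T) (y : {ffun 'I_n -> T}) : {ffun 'I_n.+1 -> T} :=
  [ffun i => if unlift ord0 i is Some j then y j else x].

Lemma fcons0 x y : fcons x y ord0 = x.
Proof. by rewrite ffunE unlift_none. Qed.

Lemma fconsS x y j : fcons x y (lift ord0 j) = y j.
Proof. by rewrite ffunE liftK. Qed.

Lemma big_fcons (R : Type) (idx : R) (op : Monoid.com_law idx)
    (F : {ffun 'I_n.+1 -> T} -> R) :
  \big[op/idx]_y F y = \big[op/idx]_x \big[op/idx]_(y : {ffun 'I_n -> T}) F (fcons x y).
Proof.
rewrite pair_big /= (reindex (fun xy : T * {ffun 'I_n -> T} => fcons xy.1 xy.2)) //.
exists (fun y : {ffun 'I_n.+1 -> T} => (y ord0, [ffun j => y (lift ord0 j)])).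
  move=> [x y] _ /=; rewrite fcons0; congr pair.
  by apply/ffunP => j; rewrite ffunE fconsS.
move=> y _; apply/ffunP => i; rewrite ffunE.
by case: unliftP => [j|] ->; rewrite ?ffunE.
Qed.

End ConsFfun.

Lemma card_set_nat_sum (T : finType) (P : pred T) : #|[set x | P x]| = \sum_x P x.
Proof. by rewrite -sum1dep_card big_mkcond; apply: eq_bigr => x _; case: (P x). Qed.

Section Decrement.
Variable T : finType.
Implicit Types (z : {ffun T -> nat}) (x a : T).

Definition decr (z : {ffun T -> nat}) (x : T) : {ffun T -> nat} :=
  [ffun a => z a - (x == a)].

Lemma decrE z x a : decr z x a = z a - (x == a).
Proof. by rewrite ffunE. Qed.

Lemma decr_neq z x a : a != x -> decr z x a = z a.
Proof. by rewrite decrE eq_sym => /negbTE ->; rewrite subn0. Qed.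

Lemma sum_decr z x : 0 < z x -> \sum_a z a = (\sum_a decr z x a).+1.
Proof.
move=> zx_gt0; rewrite (bigD1 x) //= [in RHS](bigD1 x) //= decrE eqxx.
rewrite (eq_bigr _ (fun a => @decr_neq z x a)); lia.
Qed.

Lemma prod_fact_decr z x : 0 < z x ->
  \prod_a (z a)`! = z x * \prod_a (decr z x a)`!.
Proof.
move=> zx_gt0; rewrite (bigD1 x) //= [in RHS](bigD1 x) //= decrE eqxx.
rewrite (eq_bigr _ (fun a ax => congr1 factorial (@decr_neq z x a ax))) mulnA.
by case: (z x) zx_gt0 => // m _; rewrite factS subn1.
Qed.

End Decrement.

Section Histograms.
Variables (n k : nat).
Implicit Types (y : dataset n k) (z : {ffun 'I_k -> nat}).

Lemma histE y a : hist y a = \sum_i (y i == a).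
Proof. by rewrite ffunE card_set_nat_sum. Qed.

Lemma sum_hist y : \sum_a hist y a = n.
Proof.
under eq_bigr do rewrite histE.
rewrite exchange_big /= -[RHS]card_ord -sum1_card; apply: eq_bigr => i _.
by rewrite (bigD1 (y i)) //= eqxx big1 // => a /negbTE; rewrite eq_sym => ->.
Qed.

Lemma hist_le y a : hist y a <= n.
Proof. by rewrite -[leqRHS](sum_hist y) (bigD1 a) //= leq_addr. Qed.

Lemma numhistE z : numhist n z = \sum_(y : dataset n k) (hist y == z).
Proof. exact: card_set_nat_sum. Qed.

Lemma numhist_hist_gt0 y : 0 < numhist n (hist y).
Proof. by rewrite card_gt0; apply/set0Pn; exists y; rewrite inE. Qed.

End Histograms.

Section HistogramsHead.
Variables (n k : nat).
Implicit Types (y : dataset n k) (z : {ffun 'I_k -> nat}).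

Lemma hist_fcons x y a : hist (fcons x y) a = (x == a) + hist y a.
Proof.
rewrite !histE big_ord_recl fcons0; congr addn.
by apply: eq_bigr => j _; rewrite fconsS.
Qed.

Lemma hist_fcons_eq x y z :
  (hist (fcons x y) == z) = (0 < z x) && (hist y == decr z x).
Proof.
apply/eqP/andP => [<-|[zx_gt0 /eqP hist_y]].
  split; first by rewrite hist_fcons eqxx.
  by apply/eqP/ffunP => a; rewrite decrE hist_fcons addKn.
apply/ffunP => a; rewrite hist_fcons hist_y decrE.
by case: eqP => [<-|_]; rewrite ?subn0 // add1n subn1 prednK.
Qed.

Lemma count_hist_head z w :
  \sum_(y : dataset n.+1 k) ((hist y == z) && (y ord0 == w)) =
  if 0 < z w then numhist n (decr z w) else 0.
Proof.
rewrite (big_fcons addn) /= (bigD1 w) //=.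
rewrite [X in _ + X]big1 ?addn0 => [|x /negbTE xw]; last first.
  by apply: big1 => y _; rewrite fcons0 xw andbF.
rewrite numhistE; under eq_bigr do rewrite fcons0 eqxx andbT hist_fcons_eq.
by case: ifP => // _; rewrite big1.
Qed.

Lemma numhistS z :
  numhist n.+1 z = \sum_x (if 0 < z x then numhist n (decr z x) else 0).
Proof.
rewrite numhistE (partition_big (fun y : dataset n.+1 k => y ord0) predT) //=.
apply: eq_bigr => x _; rewrite -count_hist_head big_mkcond /=.
by apply: eq_bigr => y _; case: (y ord0 == x); rewrite ?andbT ?andbF.
Qed.

End HistogramsHead.

Lemma numhist_multinomial n k (z : {ffun 'I_k -> nat}) :
  \sum_a z a = n -> numhist n z * \prod_a (z a)`! = n`!.
Proof.
elim: n z => [|n IHn] z sum_z.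
  have z0 a : z a = 0 by apply/eqP; move: sum_z; rewrite (bigD1 a) //=; lia.
  rewrite big1 ?muln1 => [|a _]; last by rewrite z0.
  rewrite numhistE (eq_bigr (fun _ => 1)) ?sum1_card ?card_ffun ?card_ord //.
  by move=> y _; have -> // : hist y == z; apply/eqP/ffunP => a; rewrite z0 histE big_ord0.
rewrite numhistS big_distrl /= (eq_bigr (fun x => z x * n`!)) => [|x _].
  by rewrite -big_distrl /= sum_z.
case: (posnP (z x)) => [->|zx_gt0] //.
rewrite (prod_fact_decr zx_gt0) mulnCA IHn //.
by apply/eqP; rewrite -eqSS -sum_decr // sum_z.
Qed.

Lemma count_hist_head_mul n k (z : {ffun 'I_k -> nat}) w :
  \sum_a z a = n.+1 ->
  (\sum_(y : dataset n.+1 k) ((hist y == z) && (y ord0 == w))) * n.+1 =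
  numhist n.+1 z * z w.
Proof.
move=> sum_z; rewrite count_hist_head.
case: (posnP (z w)) => [->|zw_gt0]; first by rewrite muln0.
have sum_decr_z : \sum_a decr z w a = n by apply/eqP; rewrite -eqSS -sum_decr // sum_z.
have fact_gt0 : 0 < \prod_a (decr z w a)`! by apply: prodn_gt0 => a; exact: fact_gt0.
apply/eqP; rewrite -(eqn_pmul2r fact_gt0) mulnAC numhist_multinomial //.
by rewrite -mulnA -prod_fact_decr // numhist_multinomial // factS mulnC.
Qed.

Local Open Scope ring_scope.

Lemma sum_bigmax_homo (R : realDomainType) (I : finType) (f : nat -> R) (h : I -> nat) :
    (0 < #|I|)%N -> {homo f : s t / (s <= t)%N >-> s <= t} -> 0 <= f 0%N ->
  \big[Num.max/0]_i f (h i) = f (\max_i h i).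
Proof.
move=> I_gt0 f_homo f0_ge0; apply/le_anti/andP; split.
  apply: bigmax_le => [|i _]; first exact: le_trans f0_ge0 (f_homo _ _ _).
  exact/f_homo/leq_bigmax.
have [i0 ->] := bigop.eq_bigmax h I_gt0.
exact: le_bigmax.
Qed.

Lemma krr_weights_ordered (R : realFieldType) (k : nat) (e : R) :
    (1 < k)%N -> 1 <= e ->
  0 <= (1 - e / (k%:R - 1 + e)) / (k%:R - 1) <= e / (k%:R - 1 + e).
Proof.
move=> k_gt1 e_ge1; set p := e / _.
have k1_gt0 : 0 < k%:R - 1 :> R by rewrite subr_gt0 ltr1n.
have D_gt0 : 0 < k%:R - 1 + e by rewrite addr_gt0 // (lt_le_trans ltr01 e_ge1).
have -> : (1 - p) / (k%:R - 1) = 1 / (k%:R - 1 + e).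
  by rewrite /p; field; rewrite (gt_eqF D_gt0) (gt_eqF k1_gt0).
by rewrite divr_ge0 ?(ltW D_gt0) //= ler_wpM2r // invr_ge0 ltW.
Qed.

Lemma gain_homo (R : realFieldType) (u p r : R) (N : nat) : 0 <= u -> r <= p ->
  {homo (fun t : nat => u * ((p * t%:R + r * (N%:R - t%:R)) / N%:R)) :
    s t / (s <= t)%N >-> s <= t}.
Proof.
move=> u_ge0 r_le_p s t; rewrite -(ler_nat R) => st.
rewrite ler_wpM2l // ler_wpM2r ?invr_ge0 // -subr_ge0.
have -> : p * t%:R + r * (N%:R - t%:R) - (p * s%:R + r * (N%:R - s%:R)) =
          (p - r) * (t%:R - s%:R) by ring.
by rewrite mulr_ge0 // subr_ge0.
Qed.

Lemma SchE (R : realType) n k (z y : dataset n k) :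
  Sch R z y = (hist z == hist y)%:R / (numhist n (hist y))%:R.
Proof. by rewrite /Sch eq_sym; case: eqP => [->|]; rewrite ?mul0r // mul1r div1r. Qed.

Section Channels.
Variables (R : realType) (n k : nat) (p : R).
Let r := (1 - p) / (k%:R - 1).

Lemma krrE (a b : 'I_k) : krr p a b = r + (p - r) * (b == a)%:R.
Proof. by rewrite /krr; case: eqP => _; rewrite ?mulr1 ?mulr0 ?addr0 // addrC subrK. Qed.

Lemma sum_krr_col (b : 'I_k) : (1 < k)%N -> \sum_a krr p a b = 1.
Proof.
move=> k_gt1; rewrite (bigD1 b) //= {1}/krr eqxx.
rewrite (eq_bigr (fun _ => r)) => [|a /negbTE ab]; last by rewrite /krr eq_sym ab.
rewrite sumr_const cardC1 card_ord -mulr_natr.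
have k1_neq0 : k%:R - 1 != 0 :> R by rewrite subr_eq0 pnatr_eq1; lia.
have -> : k.-1%:R = k%:R - 1 :> R by rewrite -[in RHS](prednK (ltnW k_gt1)) -natr1 addrK.
by rewrite /r; field.
Qed.

Lemma gT_head w (x : dataset n.+1 k) : gT R w x = (x ord0 == w)%:R.
Proof.
rewrite /gT; case: existsP => [[i /andP[/eqP i0 /eqP <-]]|no_i].
  by rewrite (_ : i = ord0) ?eqxx //; exact: ord_inj.
by case: eqP => // xw; case: no_i; exists ord0; rewrite xw eqxx.
Qed.

Lemma sum_Nch_gT w (z : dataset n.+1 k) : (1 < k)%N ->
  \sum_x Nch p x z * gT R w x = krr p w (z ord0).
Proof.
move=> k_gt1.
pose G (i : 'I_n.+1) (a : 'I_k) := krr p a (z i) * (if i == ord0 then (a == w)%:R else 1).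
transitivity (\sum_(x : dataset n.+1 k) \prod_i G i (x i)).
  apply: eq_bigr => x _; rewrite gT_head /Nch !big_ord_recl /G eqxx mulrAC.
  by congr (_ * _); apply: eq_bigr => i _; rewrite mulr1.
rewrite -bigA_distr_bigA /= big_ord_recl [X in _ * X]big1 => [|i _]; last first.
  by rewrite /G /=; under eq_bigr do rewrite mulr1; exact: sum_krr_col.
rewrite mulr1 /G eqxx (bigD1 w) //= eqxx mulr1 big1 ?addr0 // => a /negbTE ->.
by rewrite mulr0.
Qed.

Lemma sum_Sch_krr_head (y : dataset n.+1 k) w :
  \sum_z Sch R z y * krr p w (z ord0) =
  (p * (hist y w)%:R + r * (n.+1%:R - (hist y w)%:R)) / n.+1%:R.
Proof.
set m := numhist n.+1 (hist y); set h := hist y w.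
have m_neq0 : m%:R != 0 :> R by rewrite pnatr_eq0 -lt0n numhist_hist_gt0.
have card_class : \sum_(z : dataset n.+1 k) (hist z == hist y)%:R = m%:R :> R.
  by rewrite /m numhistE natr_sum.
have card_class_head :
    \sum_(z : dataset n.+1 k) (hist z == hist y)%:R * (z ord0 == w)%:R =
    m%:R * h%:R / n.+1%:R :> R.
  have /(congr1 (GRing.natmul (1 : R))) := count_hist_head_mul w (sum_hist y).
  rewrite !natrM natr_sum -/m -/h => <-; rewrite mulfK ?pnatr_eq0 //.
  by apply: eq_bigr => z _; rewrite -natrM mulnb.
transitivity (m%:R^-1 * (r * \sum_(z : dataset n.+1 k) (hist z == hist y)%:R +
    (p - r) * \sum_(z : dataset n.+1 k) (hist z == hist y)%:R * (z ord0 == w)%:R)).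
  rewrite mulrDr !big_distrr -big_split /=; apply: eq_bigr => z _.
  by rewrite SchE krrE; ring.
rewrite card_class card_class_head; field.
by rewrite m_neq0 andbT nat1r pnatr_eq0.
Qed.

Lemma sum_unif_NSch_gT (y : dataset n.+1 k) w : (1 < k)%N ->
  \sum_x unif_prior R x * NSch p x y * gT R w x =
  1 / (k%:R ^+ n.+1) * ((p * (hist y w)%:R + r * (n.+1%:R - (hist y w)%:R)) / n.+1%:R).
Proof.
move=> k_gt1; rewrite -sum_Sch_krr_head /unif_prior /NSch.
set u := 1 / _.
transitivity (\sum_x \sum_(z : dataset n.+1 k) u * (Sch R z y * (Nch p x z * gT R w x))).
  apply: eq_bigr => x _; rewrite big_distrr big_distrl /=.
  by apply: eq_bigr => z _; ring.
rewrite exchange_big big_distrr; apply: eq_bigr => z _ /=.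
by rewrite -!big_distrr /= sum_Nch_gT.
Qed.

End Channels.

Section HistogramClasses.
Variables (n k : nat).

Definition hist_ord (y : dataset n k) : {ffun 'I_k -> 'I_n.+1} :=
  [ffun a => inord (hist y a)].

Definition ffun_val (z : {ffun 'I_k -> 'I_n.+1}) : {ffun 'I_k -> nat} :=
  [ffun a => val (z a)].

Lemma hist_ordE y a : hist_ord y a = inord (hist y a).
Proof. by rewrite ffunE. Qed.

Lemma ffun_valE z a : ffun_val z a = z a.
Proof. by rewrite ffunE. Qed.

Lemma hist_ord_eq y z : (hist_ord y == z) = (hist y == ffun_val z).
Proof.
apply/eqP/eqP => [<-|hist_y]; apply/ffunP => a.
  by rewrite ffun_valE hist_ordE inordK // ltnS hist_le.
by apply: val_inj; rewrite /= hist_ordE hist_y ffun_valE inordK.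
Qed.

Lemma sum_dataset_by_hist (R : numFieldType) (G : {ffun 'I_k -> nat} -> R) :
  \sum_(y : dataset n k) G (hist y) =
  \sum_(z : {ffun 'I_k -> 'I_n.+1} | (\sum_(j < k) (z j : nat))%N == n)
     ((n`!)%:R / (\prod_(j < k) ((z j : nat)`!)%:R)) * G (ffun_val z).
Proof.
rewrite (partition_big hist_ord (fun z : {ffun 'I_k -> 'I_n.+1} => \sum_j (z j : nat) == n)%N);
  last first.
  move=> y _; rewrite -[X in _ == X](sum_hist y); apply/eqP/eq_bigr => a _.
  by rewrite hist_ordE inordK // ltnS hist_le.
apply: eq_bigr => z /eqP sum_z.
have sum_val : (\sum_a ffun_val z a)%N = n.
  by rewrite -sum_z; apply: eq_bigr => a _; rewrite ffun_valE.
have prod_val : (\prod_a (ffun_val z a)`!)%N = (\prod_j (z j : nat)`!)%N.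
  by apply: eq_bigr => a _; rewrite ffun_valE.
have prod_neq0 : (\prod_j ((z j : nat)`!)%:R : R) != 0.
  by rewrite -natr_prod pnatr_eq0 -lt0n prodn_gt0 // => j; exact: fact_gt0.
rewrite -(numhist_multinomial sum_val) prod_val natrM natr_prod mulfK // numhistE natr_sum.
rewrite big_distrl /= big_mkcond /=; apply: eq_bigr => y _.
by rewrite hist_ord_eq; case: eqP => [->|]; rewrite ?mul1r ?mul0r.
Qed.

End HistogramClasses.

Theorem mainTheorem14 (R : realType) (n k : nat) (eps : R)
  (hn : (1 <= n)%N) (hk : (2 <= k)%N) (heps : 0 <= eps) :
  let p := expR eps / (k%:R - 1 + expR eps) in
  VT (@unif_prior R n k) (@NSch R n k p) =
  1 / (k%:R ^+ n) *
  \sum_(z : {ffun 'I_k -> 'I_n.+1} | (\sum_(j < k) (z j : nat))%N == n)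
     ((n`!)%:R / (\prod_(j < k) ((z j : nat)`!)%:R)) *
     (let nstar := (\max_(j < k) (z j : nat))%N in
      (p * nstar%:R + (1 - p) / (k%:R - 1) * (n%:R - nstar%:R)) / n%:R).
Proof.
move=> p; case: n hn => // n _.
set r := (1 - p) / (k%:R - 1); set u : R := 1 / _.
have /andP[r_ge0 r_le_p] : 0 <= r <= p.
  by apply: krr_weights_ordered; rewrite // (le_trans _ (expR_ge1Dx eps)) // lerDl.
pose gain t := u * ((p * t%:R + r * (n.+1%:R - t%:R)) / n.+1%:R).
have u_ge0 : 0 <= u by rewrite divr_ge0 // exprn_ge0.
have gain0_ge0 : 0 <= gain 0%N.
  by rewrite /gain mulr0 add0r subr0 mulr_ge0 // divr_ge0 // mulr_ge0.
rewrite /VT (eq_bigr (fun y : dataset n.+1 k => gain (\max_w hist y w))) => [|y _]; last first.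
  rewrite (eq_bigr _ (fun w _ => sum_unif_NSch_gT p y w hk)).
  rewrite (@sum_bigmax_homo _ _ gain (hist y)) ?card_ord ?(ltnW hk) //.
  exact: gain_homo u_ge0 r_le_p.
rewrite (sum_dataset_by_hist n.+1 (fun h => gain (\max_w h w))) big_distrr /=.
apply: eq_bigr => z _; rewrite mulrCA /gain.
suff -> : (\max_w ffun_val z w = \max_j (z j : nat))%N by [].
by apply: eq_bigr => j _; exact: ffun_valE.
Qed.
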